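(* Let $V$ be a finite vocabulary. Each word $x\in V$ has a synonym set $S_x\subseteq V$ with $x\in S_x$, the synonym relation being symmetric, and a nonempty perturbation set $P_x\subseteq V$; assume $|P_x|=|P_{x'}|$ for every word $x$ and every $x'\in S_x$. Write $n_x=|P_x|$ and $n_{x,x'}=|P_x\cap P_{x'}|$. Fix $L\ge1$ and $0\le R\le L$. For $X=x_1,\ldots,x_L\in V^L$ let $S_X=\{X'\in V^L: \sum_i\mathbb{I}\{x'_i\ne x_i\}\le R,\ x'_i\in S_{x_i}\ \forall i\}$ and $\Pi_X(Z)=\prod_{i=1}^L\mathbb{I}\{z_i\in P_{x_i}\}/|P_{x_i}|$. For each word $x$ let $\tilde x^*\in\arg\min_{x'\in S_x}n_{x,x'}/n_x$. Given $X=x_1,\ldots,x_L$, order its positions as $\ell_1,\ldots,\ell_L$ so that $n_{x_{\ell_i},\tilde x^*_{\ell_i}}/n_{x_{\ell_i}}\le n_{x_{\ell_j},\tilde x^*_{\ell_j}}/n_{x_{\ell_j}}$ whenever $i\le j$ (here $\tilde x^*_k$ denotes $\widetilde{(x_k)}^*$), and define $X^*=x^*_1,\ldots,x^*_L$ by $x^*_i=\tilde x^*_i$ if $i\in\{\ell_1,\ldots,\ell_R\}$ and $x^*_i=x_i$ otherwise. Then for every $\lambda\ge0$, $$\max_{X'\in S_X}\sum_{Z\in V^L}\big(\lambda\Pi_X(Z)-\Pi_{X'}(Z)\big)_+=\sum_{Z\in V^L}\big(\lambda\Pi_X(Z)-\Pi_{X^*}(Z)\big)_+,$$ where $(s)_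+=\max(s,0)$.
   Context: $X^*\in S_X$ since it differs from $X$ in at most $R$ positions, each by a synonym. *)

From HB Require Import structures.
From mathcomp Require Import all_boot all_order all_algebra all_fingroup.
Set Implicit Arguments. Unset Strict Implicit. Unset Printing Implicit Defensive.
Import Order.TTheory GRing.Theory Num.Theory.
Local Open Scope ring_scope.

Section Defs.
Variables (F : realFieldType) (V : finType) (L : nat).

Definition overlap_ratio (P : V -> {set V}) (x x' : V) : F :=
  #|P x :&: P x'|%:R / #|P x|%:R.

Definition SX (S : V -> {set V}) (R : nat) (X : {ffun 'I_L -> V}) :
    pred {ffun 'I_L -> V} :=
  fun X' => (#|[set i | X' i != X i]| <= R)%N && [forall i, X' i \in S (X i)].

Definition PiX (P : V -> {set V}) (X Z : {ffun 'I_L -> V}) : F :=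
  \prod_(i < L) ((Z i \in P (X i))%:R / #|P (X i)|%:R).

Definition pos_part (s : F) : F := Num.max s 0.

Definition hinge_value (P : V -> {set V}) (lam : F) (X X' : {ffun 'I_L -> V}) : F :=
  \sum_(Z : {ffun 'I_L -> V}) pos_part (lam * PiX P X Z - PiX P X' Z).

(* X^*: replace positions l_1..l_R (ell j for j < R) by xt *)
Definition Xstar (xt : V -> V) (R : nat) (ell : {perm 'I_L})
    (X : {ffun 'I_L -> V}) : {ffun 'I_L -> V} :=
  [ffun i => if ((ell^-1)%g i < R)%N then xt (X i) else X i].

End Defs.

From HB Require Import structures.
From mathcomp Require Import all_boot all_order all_algebra all_fingroup.
From mathcomp Require Import lra.
Import Order.TTheory GRing.Theory Num.Theory.
Local Open Scope ring_scope.

(* When |P x'_i| = |P x_i| for all i, both Pi_X and Pi_X' are uniform with the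
   same mass c on their supports, so (lam Pi_X - Pi_X')_+ equals lam Pi_X off the
   common support and (lam - 1)_+ c on it.  Summing, the hinge value is
   lam - min(lam, 1) prod_i n_{x_i,x'_i}/n_{x_i}, and maximizing it over S_X means
   minimizing a product of ratios in [0, 1].  A changed position i costs at least
   the minimal ratio n_{x_i,x~*_i}/n_{x_i} and an unchanged one costs 1; as at most
   R positions change, the product is at least that of the R smallest minimal
   ratios, which X^* attains. *)

Lemma card_ord_lt (n m : nat) : (#|[set j : 'I_n | (j < m)%N]| <= m)%N.
Proof.
rewrite cardE -(size_map val) -[leqRHS](size_iota 0).
apply: uniq_leq_size => [|x /mapP[j]]; first by rewrite (map_inj_uniq val_inj) enum_uniq.
by rewrite mem_enum inE mem_iota => j_lt_m ->.
Qed.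

Section ProductBounds.
Variable F : realFieldType.

Lemma prodr_le_subset (I : finType) (A B : pred I) (f : I -> F) :
  (forall i, 0 <= f i <= 1) -> {subset A <= B} ->
  \prod_(i | B i) f i <= \prod_(i | A i) f i.
Proof.
move=> f01 sAB; rewrite [leLHS]big_mkcond [leRHS]big_mkcond /=.
apply: ler_prod => i _; have /andP[f_ge0 f_le1] := f01 i.
case: (boolP (A i)) => [Ai | _]; first by have -> : B i := sAB i Ai; rewrite f_ge0 lexx.
by case: (B i); rewrite /= ?f_ge0 ?f_le1 ?ler01 ?lexx.
Qed.

Lemma prod_prefix_le_prod_set {n : nat} {f : 'I_n -> F} :
  (forall i, 0 <= f i) -> (forall i j : 'I_n, (i <= j)%N -> f i <= f j) ->
  forall T : {set 'I_n}, \prod_(i < n | (i < #|T|)%N) f i <= \prod_(i in T) f i.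
Proof.
move=> f_ge0 f_homo T; have [k] := ubnP #|T|; elim: k T => // k IH T.
rewrite ltnS => T_le_k; have [-> | [m0 m0T]] := set_0Vmem T.
  by rewrite cards0 big_set0 big_pred0.
(* Peel off the largest element m of T: the rest lies below m, so #|T| - 1 <= m. *)
have [m mT m_max] := @arg_maxnP _ m0 (fun j => j \in T) val m0T.
have cardT : #|T| = #|T :\ m|.+1 by rewrite (cardsD1 m T) mT.
have card_Tm_le_m : (#|T :\ m| <= m)%N.
  apply: leq_trans (card_ord_lt n m); apply/subset_leq_card/subsetP => j.
  rewrite !inE => /andP[j_neq_m jT]; rewrite ltn_neqAle (m_max j jT : (j <= m)%N) andbT.
  by apply: contra j_neq_m => /eqP/val_inj ->.
have k_lt_n : (#|T :\ m| < n)%N := leq_ltn_trans card_Tm_le_m (ltn_ord m).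
rewrite cardT (bigD1 (Ordinal k_lt_n)) //= (bigD1 m mT) /=.
apply: ler_pM; rewrite ?prodr_ge0 ?f_homo //.
rewrite (eq_bigl (fun i : 'I_n => (i < #|T :\ m|)%N)) => [|i].
  rewrite [leRHS](eq_bigl (fun i => i \in T :\ m)) => [|i]; last by rewrite in_setD1 andbC.
  by apply: IH; rewrite -ltnS -cardT.
by rewrite ltnS -val_eqE /= andbC -ltn_neqAle.
Qed.

Lemma prodr_indicator (I T : finType) (A : I -> {set T}) (c : I -> F) (z : I -> T) :
  \prod_i ((z i \in A i)%:R * c i) = [forall i, z i \in A i]%:R * \prod_i c i.
Proof.
rewrite big_split /=; congr (_ * _).
case: (boolP [forall i, _]) => [/forallP zA | /forallPn[i ziA]].
  by rewrite big1 // => i _; rewrite zA.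
by rewrite (bigD1 i) //= (negbTE ziA) mul0r.
Qed.

Lemma pos_part_indicator (lam c : F) (a b : bool) : 0 <= lam -> 0 <= c ->
  pos_part (lam * (a%:R * c) - b%:R * c) =
  lam * (a%:R * c) - Num.min lam 1 * ((a && b)%:R * c).
Proof.
move=> lam_ge0 c_ge0; rewrite /pos_part.
have [lam_le1 | lam_gt1] := lerP lam 1;
  case: a; case: b; rewrite /= ?mul1r ?mul0r ?mulr0 ?subr0 ?sub0r.
all: by [rewrite max_r //; nra | rewrite max_l //; nra].
Qed.

End ProductBounds.

Section HingeValue.
Variables (F : realFieldType) (V : finType) (L : nat) (P : V -> {set V}).
Hypothesis P_neq0 : forall x, P x != set0.

Lemma card_P_neq0 x : #|P x|%:R != 0 :> F.
Proof. by rewrite pnatr_eq0 -lt0n card_gt0. Qed.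

Lemma overlap_ratio_id x : overlap_ratio F P x x = 1.
Proof. by rewrite /overlap_ratio setIid divff ?card_P_neq0. Qed.

Lemma overlap_ratio_ge0 x y : 0 <= overlap_ratio F P x y.
Proof. by rewrite divr_ge0 ?ler0n. Qed.

Lemma overlap_ratio_le1 x y : overlap_ratio F P x y <= 1.
Proof.
rewrite /overlap_ratio ler_pdivrMr ?ltr0n ?card_gt0 // mul1r ler_nat.
exact/subset_leq_card/subsetIl.
Qed.

Lemma sum_prodr_indicator (A : 'I_L -> {set V}) (c : 'I_L -> F) :
  \sum_(Z : {ffun 'I_L -> V}) \prod_i ((Z i \in A i)%:R * c i) =
  \prod_i (#|A i|%:R * c i).
Proof.
transitivity (\prod_i \sum_v (v \in A i)%:R * c i); first by rewrite bigA_distr_bigA.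
apply: eq_bigr => i _.
rewrite (eq_bigr (fun v => if v \in A i then c i else 0)) => [|v _].
  by rewrite -big_mkcond sumr_const mulr_natl.
by case: (v \in A i); rewrite ?mul1r ?mul0r.
Qed.

Lemma hinge_value_closed_form (lam : F) (X X' : {ffun 'I_L -> V}) :
  0 <= lam -> (forall i, #|P (X' i)| = #|P (X i)|) ->
  hinge_value P lam X X' =
  lam - Num.min lam 1 * \prod_i overlap_ratio F P (X i) (X' i).
Proof.
move=> lam_ge0 card_eq.
pose c := \prod_i (#|P (X i)|%:R)^-1 : F.
have c_ge0 : 0 <= c by rewrite prodr_ge0 // => i _; rewrite invr_ge0 ler0n.
have hinge_at Z : pos_part (lam * PiX F P X Z - PiX F P X' Z) =
    lam * PiX F P X Z - Num.min lam 1 *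
      \prod_i ((Z i \in P (X i) :&: P (X' i))%:R / #|P (X i)|%:R).
  have -> : PiX F P X' Z = \prod_i ((Z i \in P (X' i))%:R / #|P (X i)|%:R).
    by apply: eq_bigr => i _; rewrite card_eq.
  rewrite /PiX !prodr_indicator pos_part_indicator //; congr (_ - _ * ((nat_of_bool _)%:R * _)).
  apply/idP/idP => [/andP[/forallP ZX /forallP ZX'] | /forallP ZXX'].
    by apply/forallP => i; apply/setIP.
  by apply/andP; split; apply/forallP => i; have /setIP[] := ZXX' i.
rewrite /hinge_value (eq_bigr _ (fun Z _ => hinge_at Z)) sumrB -!mulr_sumr.
rewrite !sum_prodr_indicator big1 ?mulr1 // => i _.
by rewrite divff ?card_P_neq0.
Qed.

End HingeValue.

Section OptimalPerturbation.
Variables (F : realFieldType) (V : finType) (S P : V -> {set V}) (xt : V -> V).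
Variables (L R : nat) (ell : {perm 'I_L}) (X : {ffun 'I_L -> V}).
Hypothesis xt_in : forall x, xt x \in S x.

Lemma Xstar_in_SX : (forall x, x \in S x) -> Xstar xt R ell X \in SX S R X.
Proof.
move=> S_refl; apply/andP; split.
  apply: leq_trans (card_ord_lt L R); rewrite -[leqRHS](card_preimset _ (@perm_inj _ ell^-1)).
  apply/subset_leq_card/subsetP => i; rewrite !inE ffunE.
  by case: ifP; rewrite ?eqxx.
by apply/forallP => i; rewrite ffunE; case: ifP.
Qed.

Hypothesis P_neq0 : forall x, P x != set0.
Hypothesis xt_min : forall x x', x' \in S x ->
  overlap_ratio F P x (xt x) <= overlap_ratio F P x x'.
Hypothesis ell_sorted : forall i j : 'I_L, (i <= j)%N ->
  overlap_ratio F P (X (ell i)) (xt (X (ell i)))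
    <= overlap_ratio F P (X (ell j)) (xt (X (ell j))).

Lemma prod_overlap_Xstar_le X' : X' \in SX S R X ->
  \prod_i overlap_ratio F P (X i) (Xstar xt R ell X i) <=
  \prod_i overlap_ratio F P (X i) (X' i).
Proof.
move=> /andP[card_moved /forallP X'_syn].
pose f j := overlap_ratio F P (X (ell j)) (xt (X (ell j))).
pose T := [set j | X' (ell j) != X (ell j)].
have card_T : (#|T| <= R)%N.
  apply: leq_trans card_moved; rewrite -[leqRHS](card_preimset _ (@perm_inj _ ell)).
  by apply/subset_leq_card/subsetP => j; rewrite !inE.
rewrite [leLHS](reindex_inj (@perm_inj _ ell)) [leRHS](reindex_inj (@perm_inj _ ell)) /=.
have -> : \prod_j overlap_ratio F P (X (ell j)) (Xstar xt R ell X (ell j)) =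
          \prod_(j < L | (j < R)%N) f j.
  rewrite [RHS]big_mkcond; apply: eq_bigr => j _.
  by rewrite ffunE permK; case: ifP => // _; rewrite overlap_ratio_id.
have f_ge0 j : 0 <= f j by apply: overlap_ratio_ge0.
have f01 j : 0 <= f j <= 1 by rewrite f_ge0 overlap_ratio_le1.
have R_to_T : \prod_(j < L | (j < R)%N) f j <= \prod_(j < L | (j < #|T|)%N) f j.
  by apply: prodr_le_subset => // j /leq_trans; apply.
apply: le_trans R_to_T _.
apply: le_trans (prod_prefix_le_prod_set _ f_ge0 ell_sorted T) _.
rewrite big_mkcond; apply: ler_prod => j _; rewrite inE.
case: ifP => [_ | /negbFE/eqP ->]; first by rewrite overlap_ratio_ge0 xt_min.
by rewrite overlap_ratio_id // ler01 lexx.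
Qed.

End OptimalPerturbation.

Theorem lemma3 (F : realFieldType) (V : finType)
  (S P : V -> {set V})
  (HSrefl : forall x, x \in S x)
  (HSsym : forall x x', x' \in S x -> x \in S x')
  (HPne : forall x, P x != set0)
  (HPcard : forall x x', x' \in S x -> #|P x| = #|P x'|)
  (L R : nat) (HL : (1 <= L)%N) (HR : (R <= L)%N)
  (xt : V -> V)
  (Hxt_in : forall x, xt x \in S x)
  (Hxt_min : forall x x', x' \in S x ->
     overlap_ratio F P x (xt x) <= overlap_ratio F P x x')
  (X : {ffun 'I_L -> V}) (ell : {perm 'I_L})
  (Hell : forall i j : 'I_L, (i <= j)%N ->
     overlap_ratio F P (X (ell i)) (xt (X (ell i)))
       <= overlap_ratio F P (X (ell j)) (xt (X (ell j))))
  (lam : F) (Hlam : 0 <= lam) :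
  Xstar xt R ell X \in SX S R X /\
  (forall X', X' \in SX S R X ->
     hinge_value P lam X X' <= hinge_value P lam X (Xstar xt R ell X)).
Proof.
have Xstar_in : Xstar xt R ell X \in SX S R X by apply: Xstar_in_SX.
have card_P_SX X' : X' \in SX S R X -> forall i, #|P (X' i)| = #|P (X i)|.
  by case/andP=> _ /forallP X'_syn i; rewrite (HPcard _ _ (X'_syn i)).
split=> // X' X'_in.
have card_P_X' := card_P_SX _ X'_in; have card_P_Xstar := card_P_SX _ Xstar_in.
rewrite !hinge_value_closed_form //.
rewrite lerD2l lerN2 ler_wpM2l ?le_min ?Hlam ?ler01 //.
exact: prod_overlap_Xstar_le HPne Hxt_min Hell _ X'_in.
Qed.
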